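(* Let $I\subseteq\mathbb{K}[x_1,\dots,x_d]$ be a pure difference ideal. (1) Suppose $I=\langle p\rangle$ where $p$ is a canonical pure difference binomial, and let $L\subseteq\mathbb{Z}^d$ be the lattice spanned by the exponent vector of $p$. Then $I=I_L$; if moreover $p$ is irreducible, then $I=I_{\operatorname{Sat}(L)}$. (2) Suppose $I=\langle p_1,\dots,p_k\rangle$ with $p_1,\dots,p_k$ pure difference binomials with exponent vectors $\bm{v}_1,\dots,\bm{v}_k$, at least one of which lies in $\mathbb{Z}_{>0}^d$. Let $J$ be the ideal generated by the canonical binomials of $\bm{v}_1,\dots,\bm{v}_k$ and $L$ the lattice spanned by $\bm{v}_1,\dots,\bm{v}_k$. Then $J=I_L$.
   Context: $\mathbb{K}=\overline{\mathbb{Q}}$. A pure difference binomial is $\bm{x}^{\bm{\alpha}}-\bm{x}^{\bm{\beta}}$ with $\bm{\alpha},\bm{\beta}\in\mathbb{N}^d$; its exponent vector is $\bm{\alpha}-\bm{\beta}$; a pure difference ideal is an ideal generated by pure difference binomials. For $\bm{v}\in\mathbb{Z}^d$, with $\bm{v}_+=(\max\{v_1,0\},\dots,\max\{v_d,0\})$ and $\bm{v}_-=\bm{v}_+-\bm{v}$, the canonical binomial of $\bm{v}$ is $\bm{x}^{\bm{v}_+}-\bm{x}^{\bm{v}_-}$; a canonical pure difference binomial is the canonical binomial of some vector. For a lattice $L\subseteq\mathbb{Z}^d$, $I_L=\langle \bm{x}^{\bm{\alpha}}-\bm{x}^{\bm{\beta}} : \bm{\alpha},\bm{\beta}\in\mathbb{N}^d,\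 \bm{\alpha}-\bm{\beta}\in L\rangle$ and $\operatorname{Sat}(L)=\{\bm{u}\in\mathbb{Z}^d : c\bm{u}\in L\text{ for some } c\in\mathbb{Z}\setminus\{0\}\}$. *)

From HB Require Import structures.
From mathcomp Require Import all_boot all_order all_algebra all_field.
From mathcomp Require Import mpoly.
Set Implicit Arguments. Unset Strict Implicit. Unset Printing Implicit Defensive.
Import Order.TTheory GRing.Theory Num.Theory.
Local Open Scope ring_scope.

(* The polynomial ring K[x_1,...,x_d] with K = algC (algebraic closure of Q). *)
Notation Kpoly d := {mpoly algC[d]}.

Definition pdbinom (d : nat) (a b : 'X_{1..d}) : Kpoly d := 'X_[a] - 'X_[b].

Definition expvec (d : nat) (a b : 'X_{1..d}) : 'rV[int]_d :=
  \row_i ((a i)%:Z - (b i)%:Z).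

Definition vpos (d : nat) (v : 'rV[int]_d) : 'X_{1..d} :=
  [multinom (if (0 <= v ord0 i)%R then absz (v ord0 i) else 0%N) | i < d].
Definition vneg (d : nat) (v : 'rV[int]_d) : 'X_{1..d} :=
  [multinom (if (v ord0 i < 0)%R then absz (v ord0 i) else 0%N) | i < d].

Definition canon_binom (d : nat) (v : 'rV[int]_d) : Kpoly d :=
  pdbinom (vpos v) (vneg v).

Definition ideal_gen (d : nat) (S : Kpoly d -> Prop) : Kpoly d -> Prop :=
  fun f => exists (n : nat) (c g : 'I_n -> Kpoly d),
    (forall i, S (g i)) /\ f = \sum_(i < n) c i * g i.

Definition same_ideal (d : nat) (I J : Kpoly d -> Prop) : Prop :=
  forall f, I f <-> J f.

Definition lattice_span (d k : nat) (v : 'I_k -> 'rV[int]_d) : 'rV[int]_d -> Prop :=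
  fun u => exists c : 'I_k -> int, u = \sum_(i < k) v i *~ c i.

Definition Sat (d : nat) (L : 'rV[int]_d -> Prop) : 'rV[int]_d -> Prop :=
  fun u => exists c : int, c != 0 /\ L (u *~ c).

Definition lattice_ideal (d : nat) (L : 'rV[int]_d -> Prop) : Kpoly d -> Prop :=
  ideal_gen (fun f => exists a b : 'X_{1..d}, L (expvec a b) /\ f = pdbinom a b).

Definition is_unit_poly (d : nat) (f : Kpoly d) : Prop := exists h, f * h = 1.
Definition irreducible_mpoly (d : nat) (p : Kpoly d) : Prop :=
  p != 0 /\ ~ is_unit_poly p /\
  forall f g : Kpoly d, p = f * g -> is_unit_poly f \/ is_unit_poly g.

(* Write a ~ b when x^a - x^b lies in a given ideal; this is a congruence on
   the monoid N^d.  For (1): since v_+ and v_- have disjoint supports, every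
   pair (a, b) with a - b = n v is a translate of (n v_+, n v_-), and
   n v_+ ~ n v_- follows from v_+ ~ v_-.  If p is irreducible then v is
   primitive, because x^(nA) - x^(nB) is divisible by x^A - x^B; a primitive
   vector spans a saturated lattice.  For (2): a generator x^P - 1 with P > 0
   makes ~ cancellative, as any x^m divides x^(kP) ~ 1.  For a cancellative
   congruence, a ~ b depends only on a - b, and the differences that occur
   form a subgroup of Z^d containing the v_i, hence all of L. *)

From HB Require Import structures.
From mathcomp Require Import all_boot all_order all_algebra all_field.
From mathcomp Require Import mpoly zify ring.
Import Order.TTheory GRing.Theory Num.Theory.
Local Open Scope ring_scope.
Set Implicit Arguments. Unset Strict Implicit.

Section IdealGen.
Variable d : nat.
Implicit Types (S T : Kpoly d -> Prop) (f g : Kpoly d).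

Lemma ideal_gen0 S : ideal_gen S 0.
Proof. by exists 0%N, (fun _ => 0), (fun _ => 0); split; [case | rewrite big_ord0]. Qed.

Lemma ideal_gen_mem S f : S f -> ideal_gen S f.
Proof.
by move=> Sf; exists 1%N, (fun _ => 1), (fun _ => f); rewrite big_ord1 mul1r.
Qed.

Lemma ideal_genMl S h f : ideal_gen S f -> ideal_gen S (h * f).
Proof.
case=> n [c [g [Sg ->]]]; exists n, (fun i => h * c i), g; split=> //.
by rewrite mulr_sumr; apply: eq_bigr => i _; rewrite mulrA.
Qed.

Lemma ideal_genN S f : ideal_gen S f -> ideal_gen S (- f).
Proof. by move=> /(ideal_genMl (-1)); rewrite mulN1r. Qed.

Lemma ideal_genD S f g : ideal_gen S f -> ideal_gen S g -> ideal_gen S (f + g).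
Proof.
case=> n1 [c1 [g1 [S1 ->]]] [n2 [c2 [g2 [S2 ->]]]].
pose glue (U : Type) (F1 : 'I_n1 -> U) (F2 : 'I_n2 -> U) i :=
  match split i with inl j => F1 j | inr j => F2 j end.
exists (n1 + n2)%N, (glue _ c1 c2), (glue _ g1 g2); split.
  by move=> i; rewrite /glue; case: (split i).
by rewrite big_split_ord /glue; congr (_ + _); apply: eq_bigr => i _;
  [rewrite (unsplitK (inl i)) | rewrite (unsplitK (inr i))].
Qed.

Lemma ideal_gen_sub S T :
  (forall f, S f -> ideal_gen T f) -> forall f, ideal_gen S f -> ideal_gen T f.
Proof.
move=> ST _ [n [c [g [Sg ->]]]].
elim/big_rec: _ => [|i h _ Th]; first exact: ideal_gen0.
exact/ideal_genD/Th/ideal_genMl/ST.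
Qed.

End IdealGen.

Definition ideal_cong d (S : Kpoly d -> Prop) (a b : 'X_{1..d}) :=
  ideal_gen S (pdbinom a b).

Section IdealCong.
Variables (d : nat) (S : Kpoly d -> Prop).
Implicit Types a b m : 'X_{1..d}.
Local Notation cong := (ideal_cong S).

Lemma ideal_cong_refl a : cong a a.
Proof. by rewrite /ideal_cong /pdbinom subrr; apply: ideal_gen0. Qed.

Lemma ideal_cong_sym a b : cong a b -> cong b a.
Proof. by move=> /ideal_genN; rewrite /pdbinom opprB. Qed.

Lemma ideal_cong_trans a b c : cong a b -> cong b c -> cong a c.
Proof. by move=> ab bc; have := ideal_genD ab bc; rewrite /pdbinom addrA subrK. Qed.

Lemma ideal_cong_addr m a b : cong a b -> cong (a + m) (b + m).
Proof.
by move=> /(ideal_genMl 'X_[m]); rewrite /pdbinom mulrBr -!mpolyXD ![(m + _)%MM]addmC.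
Qed.

Lemma ideal_cong_addl m a b : cong a b -> cong (m + a) (m + b).
Proof. by rewrite ![(m + _)%MM]addmC; apply: ideal_cong_addr. Qed.

Lemma ideal_cong_add a b a' b' : cong a b -> cong a' b' -> cong (a + a') (b + b').
Proof.
by move=> ab ab'; apply: ideal_cong_trans (ideal_cong_addr _ ab) (ideal_cong_addl _ ab').
Qed.

Lemma ideal_cong_mulmn n a b : cong a b -> cong (a *+ n) (b *+ n).
Proof.
move=> ab; elim: n => [|n IHn]; first by rewrite !mulm0n; apply: ideal_cong_refl.
by rewrite !mulmS; apply: ideal_cong_add.
Qed.

Lemma ideal_cong_cancel (P : 'X_{1..d}) : (forall j, 0 < P j)%N -> cong P 0 ->
  forall a b m, cong (a + m) (b + m) -> cong a b.
Proof.
move=> P_gt0 P1 a b m abm; set K := mdeg m.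
have le_m_PK : (m <= P *+ K)%MM.
  apply/mnm_lepP => j; rewrite mulmnE.
  have : (m j <= K)%N by rewrite /K mdegE (bigD1 j) //= leq_addr.
  by have := P_gt0 j; nia.
have PK1 : cong (P *+ K) 0.
  have -> : (0 = 0 *+ K :> 'X_{1..d})%MM by apply/mnmP => j; rewrite mulmnE mnm0E.
  exact: ideal_cong_mulmn.
have aPK : cong (a + P *+ K) a by have := ideal_cong_addl a PK1; rewrite addm0.
have bPK : cong (b + P *+ K) b by have := ideal_cong_addl b PK1; rewrite addm0.
have abPK : cong (a + P *+ K) (b + P *+ K).
  by have := ideal_cong_addr (P *+ K - m) abm; rewrite -!addmA [(m + _)%MM]addmC submK.
exact: ideal_cong_trans (ideal_cong_sym aPK) (ideal_cong_trans abPK bPK).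
Qed.

End IdealCong.

Lemma mulrz_mxE m n (A : 'M[int]_(m, n)) c i j : (A *~ c) i j = A i j * c.
Proof. by rewrite -scaler_int mxE intz mulrC. Qed.

Section ExponentVectors.
Variable d : nat.
Implicit Types (a b x y : 'X_{1..d}) (v : 'rV[int]_d).

Lemma expvecE a b j : expvec a b ord0 j = (a j)%:Z - (b j)%:Z.
Proof. by rewrite mxE. Qed.

Lemma vpos_subn_vneg v j : (vpos v j)%:Z - (vneg v j)%:Z = v ord0 j.
Proof. by rewrite /vpos /vneg !mnmE; case: (ltrP (v ord0 j) 0); lia. Qed.

Lemma vpos_vneg_disjoint v j : vpos v j = 0%N \/ vneg v j = 0%N.
Proof. by rewrite /vpos /vneg !mnmE; case: (ltrP (v ord0 j) 0); [left | right]. Qed.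

Lemma vneg_eq0 v : (forall j, 0 <= v ord0 j) -> vneg v = 0%MM.
Proof. by move=> v_ge0; apply/mnmP => j; rewrite /vneg !mnmE ltNge v_ge0. Qed.

Lemma vpos_gt0 v j : 0 < v ord0 j -> (0 < vpos v j)%N.
Proof. by rewrite /vpos mnmE => v_gt0; rewrite ltW //; lia. Qed.

Lemma expvec_canon v : expvec (vpos v) (vneg v) = v.
Proof. by apply/rowP => j; rewrite expvecE vpos_subn_vneg (ord1 ord0). Qed.

Lemma expvecxx a : expvec a a = 0.
Proof. by apply/rowP => j; rewrite !mxE subrr. Qed.

Lemma expvecN a b : expvec b a = - expvec a b.
Proof. by apply/rowP => j; rewrite !mxE opprB. Qed.

Lemma expvecD a b a' b' :
  expvec (a + a') (b + b') = expvec a b + expvec a' b'.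
Proof. by apply/rowP => j; rewrite !mxE !mnmDE; lia. Qed.

Lemma expvecMn n a b : expvec (a *+ n) (b *+ n) = expvec a b *+ n.
Proof. by apply/rowP => j; rewrite mulmxnE !expvecE !mulmnE; lia. Qed.

Lemma expvec_eq a b a' b' : expvec a b = expvec a' b' -> (a + b' = a' + b)%MM.
Proof.
move=> /rowP E; apply/mnmP => j; have := E j; rewrite !expvecE !mnmDE; lia.
Qed.

Lemma expvec_translate a b x y : (forall j, a j = 0%N \/ b j = 0%N) ->
  expvec x y = expvec a b -> x = (a + (x - a))%MM /\ y = (b + (x - a))%MM.
Proof.
move=> ab_disj /rowP E; split; apply/mnmP => j; have := E j; have := ab_disj j;
  rewrite !expvecE !mnmDE mnmBE; lia.
Qed.

End ExponentVectors.

Lemma lattice_span_mem d k (vs : 'I_k -> 'rV[int]_d) i : lattice_span vs (vs i).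
Proof.
exists (fun j => (j == i)%:Z); rewrite (bigD1 i) //= big1 ?addr0 => [|j /negbTE ->].
  by rewrite eqxx mulr1z.
by rewrite mulr0z.
Qed.

Lemma lattice_ideal_canon_binom d (L : 'rV[int]_d -> Prop) v :
  L v -> lattice_ideal L (canon_binom v).
Proof.
by move=> Lv; apply: ideal_gen_mem; exists (vpos v), (vneg v); rewrite expvec_canon.
Qed.

Section CancellativeCong.
Variables (d : nat) (S : Kpoly d -> Prop).
Implicit Types (a b x y : 'X_{1..d}) (u w : 'rV[int]_d).
Local Notation cong := (ideal_cong S).
Hypothesis cong_cancel : forall a b m, cong (a + m) (b + m) -> cong a b.

Lemma ideal_cong_expvec a b x y : cong a b -> expvec x y = expvec a b -> cong x y.
Proof.
move=> ab /expvec_eq xbay; apply: (cong_cancel (m := b)).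
by rewrite xbay [(y + b)%MM]addmC; apply: ideal_cong_addr.
Qed.

Let canon_cong u := cong (vpos u) (vneg u).

Lemma canon_cong_expvec a b : cong a b -> canon_cong (expvec a b).
Proof. by move=> ab; apply: ideal_cong_expvec ab _; rewrite expvec_canon. Qed.

Lemma canon_cong0 : canon_cong 0.
Proof. by rewrite -(expvecxx 0); apply/canon_cong_expvec/ideal_cong_refl. Qed.

Lemma canon_congN u : canon_cong u -> canon_cong (- u).
Proof.
by move=> /ideal_cong_sym/canon_cong_expvec; rewrite expvecN expvec_canon.
Qed.

Lemma canon_congD u w : canon_cong u -> canon_cong w -> canon_cong (u + w).
Proof.
by move=> cu cw; have := canon_cong_expvec (ideal_cong_add cu cw);
  rewrite expvecD !expvec_canon.
Qed.

Lemma canon_congMz u c : canon_cong u -> canon_cong (u *~ c).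
Proof.
have canon_congMn n : canon_cong u -> canon_cong (u *+ n).
  move=> cu; elim: n => [|n IHn]; first by rewrite mulr0n; apply: canon_cong0.
  by rewrite mulrS; apply: canon_congD.
case: c => n cu; first exact: canon_congMn.
by rewrite NegzE mulrNz; apply/canon_congN/canon_congMn.
Qed.

Lemma lattice_ideal_sub k (vs : 'I_k -> 'rV[int]_d) :
  (forall i, canon_cong (vs i)) ->
  forall f, lattice_ideal (lattice_span vs) f -> ideal_gen S f.
Proof.
move=> cvs; apply: ideal_gen_sub => _ [x [y [[c Lxy] ->]]].
have : canon_cong (expvec x y).
  rewrite Lxy; elim/big_rec: _ => [|i u _ cu]; first exact: canon_cong0.
  exact/canon_congD/cu/canon_congMz.
by move/ideal_cong_expvec; apply; rewrite expvec_canon.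
Qed.

End CancellativeCong.

Section PrincipalIdeal.
Variables (d : nat) (v : 'rV[int]_d).
Let S := fun f : Kpoly d => f = canon_binom v.
Local Notation cong := (ideal_cong S).

Lemma principal_cong_mulrn n x y : expvec x y = v *+ n -> cong x y.
Proof.
rewrite -{1}(expvec_canon v) -expvecMn => /expvec_translate[j|ex ->].
  by rewrite !mulmnE; case: (vpos_vneg_disjoint v j) => ->; [left | right].
rewrite {1}ex; exact/ideal_cong_addr/ideal_cong_mulmn/ideal_gen_mem.
Qed.

Lemma principal_cong_mulrz c x y : expvec x y = v *~ c -> cong x y.
Proof.
case: c => n; first exact: principal_cong_mulrn.
rewrite NegzE mulrNz => /(congr1 -%R); rewrite -expvecN opprK.
by move/principal_cong_mulrn/ideal_cong_sym.
Qed.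

Lemma principal_ideal_lattice_ideal :
  same_ideal (ideal_gen S) (lattice_ideal (lattice_span (fun _ : 'I_1 => v))).
Proof.
move=> f; split; apply: ideal_gen_sub => {}f.
  by move=> ->; exact/lattice_ideal_canon_binom/(lattice_span_mem _ ord0).
case=> x [y [[c]]]; rewrite big_ord1 => /principal_cong_mulrz xy ->; exact: xy.
Qed.

End PrincipalIdeal.

Lemma canonical_ideal_lattice_ideal d k (vs : 'I_k -> 'rV[int]_d) :
  (exists i, forall j, 0 < vs i ord0 j) ->
  same_ideal (ideal_gen (fun f => exists i, f = canon_binom (vs i)))
             (lattice_ideal (lattice_span vs)).
Proof.
move=> [i0 vs_gt0]; set S := fun f => _.
have gen_cong i : ideal_cong S (vpos (vs i)) (vneg (vs i)).
  by apply: ideal_gen_mem; exists i.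
have cong_cancel := ideal_cong_cancel (fun j => vpos_gt0 (vs_gt0 j)).
have := gen_cong i0; rewrite (vneg_eq0 (fun j => ltW (vs_gt0 j))) => /cong_cancel.
move=> {}cong_cancel f; split; last exact: (lattice_ideal_sub cong_cancel gen_cong).
apply: ideal_gen_sub => _ [i ->].
exact/lattice_ideal_canon_binom/lattice_span_mem.
Qed.

Definition primitive_vec d (v : 'rV[int]_d) :=
  forall (g : int) w, v = w *~ g -> (`|g| <= 1)%N.

Section Primitivity.
Variable d : nat.
Implicit Types (A B : 'X_{1..d}) (f : Kpoly d) (v w : 'rV[int]_d).

Lemma msize_unit f : is_unit_poly f -> (msize f <= 1)%N.
Proof.
move=> [h fh1].
have f_n0 : f != 0 by apply: contra_eq_neq fh1 => ->; rewrite mul0r eq_sym oner_neq0.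
have h_n0 : h != 0 by apply: contra_eq_neq fh1 => ->; rewrite mulr0 eq_sym oner_neq0.
have := msizeM f_n0 h_n0; rewrite fh1 msize1.
have : msize h != 0%N by rewrite msize_poly_eq0.
by move: (msize f) (msize h) => a b; lia.
Qed.

Lemma msize_binom A B :
  A != B -> msize (pdbinom A B : Kpoly d) = (maxn (mdeg A) (mdeg B)).+1.
Proof.
move=> AB; apply/eqP; rewrite eqn_leq; apply/andP; split.
  by apply: leq_trans (msizeD_le _ _) _; rewrite msizeN !msizeX maxnSS.
have coefX C : (pdbinom A B)@_C = (A == C)%:R - (B == C)%:R.
  by rewrite mcoeffB !mcoeffX.
have inA : A \in msupp (pdbinom A B).
  by rewrite mcoeff_msupp coefX eqxx (eq_sym B) (negbTE AB) subr0 oner_neq0.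
have inB : B \in msupp (pdbinom A B).
  by rewrite mcoeff_msupp coefX eqxx (negbTE AB) sub0r oppr_eq0 oner_neq0.
have := msize_mdeg_lt inA; have := msize_mdeg_lt inB.
by move: (msize _) => m; lia.
Qed.

Lemma vpos_mulrn w n : vpos (w *+ n) = (vpos w *+ n)%MM.
Proof.
apply/mnmP => j; rewrite mulmnE /vpos !mnmE mulmxnE -mulr_natr natz.
by case: ifP; case: ifP; rewrite ?abszM /=; nia.
Qed.

Lemma vneg_mulrn w n : vneg (w *+ n) = (vneg w *+ n)%MM.
Proof.
apply/mnmP => j; rewrite mulmnE /vneg !mnmE mulmxnE -mulr_natr natz.
by case: ifP; case: ifP; rewrite ?abszM /=; nia.
Qed.

(* x^(nA) - x^(nB) = (x^A - x^B) (x^((n-1)A) + ... + x^((n-1)B)), and for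
   n > 1 both factors have total degree at least 1. *)
Lemma irreducible_canon_binom_mulrn w n :
  irreducible_mpoly (canon_binom (w *+ n)) -> (n <= 1)%N.
Proof.
rewrite /canon_binom vpos_mulrn vneg_mulrn; set A := vpos w; set B := vneg w.
move=> [p_n0 [_ p_irr]]; rewrite leqNgt; apply/negP => n_gt1.
have AnBn : (A *+ n)%MM != (B *+ n)%MM.
  by apply: contra_neq p_n0 => ->; rewrite /pdbinom subrr.
have AB : A != B by apply: contra_neq AnBn => ->.
set s : Kpoly d := \sum_(i < n) 'X_[A] ^+ (n.-1 - i) * 'X_[B] ^+ i.
have p_fact : pdbinom (A *+ n) (B *+ n) = pdbinom A B * s.
  by rewrite /pdbinom -!mpolyXn subrXX.
have f_n0 : pdbinom A B != 0 by rewrite -msize_poly_eq0 msize_binom.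
have s_n0 : s != 0 by apply: contra_neq p_n0 => s0; rewrite p_fact s0 mulr0.
have := msizeM f_n0 s_n0; rewrite -p_fact !msize_binom // !mdegMn -maxnMl.
have : (0 < maxn (mdeg A) (mdeg B))%N.
  rewrite leq_max !lt0n !mdeg_eq0; apply: contraR AB.
  by rewrite negb_or !negbK => /andP[/eqP-> /eqP->]; rewrite eqxx.
case: (p_irr _ _ p_fact) => /msize_unit; rewrite ?msize_binom //;
  by move: (maxn _ _) (msize s) => M m; nia.
Qed.

Lemma irreducible_canon_binom_primitive v :
  irreducible_mpoly (canon_binom v) -> primitive_vec v.
Proof.
move=> irr [] n w v_eq; move: irr; rewrite v_eq.
  exact: irreducible_canon_binom_mulrn.
rewrite NegzE mulrNz -mulNrz; exact: irreducible_canon_binom_mulrn.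
Qed.

End Primitivity.

Lemma lattice_idealS d (L L' : 'rV[int]_d -> Prop) :
  (forall u, L u -> L' u) -> forall f, lattice_ideal L f -> lattice_ideal L' f.
Proof.
move=> LL'; apply: ideal_gen_sub => _ [a [b [Lab ->]]].
by apply: ideal_gen_mem; exists a, b; split; first exact: LL'.
Qed.

(* From [u c = v e], Bezout [s c + t e = gcd c e] makes [v] the multiple
   [(s v + t u) (c / gcd c e)], so primitivity forces [c / gcd c e = +-1]. *)
Lemma Sat_span1_primitive d (v : 'rV[int]_d) : primitive_vec v ->
  forall u, Sat (lattice_span (fun _ : 'I_1 => v)) u ->
            lattice_span (fun _ : 'I_1 => v) u.
Proof.
move=> v_prim u [c [c_n0 [e]]]; rewrite big_ord1; move: (e ord0) => {}e /rowP uce.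
have {}uce j : u ord0 j * c = v ord0 j * e by have := uce j; rewrite !mulrz_mxE.
have [s [t st]] := Bezoutz c e; set g := gcdz c e in st.
have g_n0 : g != 0 by rewrite gcdz_eq0 negb_and c_n0.
set c' := (c %/ g)%Z; have c_eq : c = c' * g by rewrite divzK ?dvdz_gcdl.
set e' := (e %/ g)%Z; have e_eq : e = e' * g by rewrite divzK ?dvdz_gcdr.
have v_eq : v = (\row_j (s * v ord0 j + t * u ord0 j)) *~ c'.
  apply/rowP => j; rewrite mulrz_mxE mxE; apply: (mulIf g_n0).
  rewrite -mulrA -c_eq mulrDl -[t * _ * c]mulrA uce -st; ring.
have c'_unit : c' * c' = 1.
  have c'_n0 : c' != 0 by apply: contra_neq c_n0 => c'0; rewrite c_eq c'0 mul0r.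
  have c'_le1 := v_prim _ _ v_eq.
  by have [->|->] : c' = 1 \/ c' = -1 by lia.
exists (fun _ => e' * c'); rewrite big_ord1; apply/rowP => j; rewrite mulrz_mxE.
have : u ord0 j * c' = v ord0 j * e'.
  by apply: (mulIf g_n0); rewrite -!mulrA -c_eq -e_eq uce.
by move=> uc'; rewrite mulrA -uc' -mulrA c'_unit mulr1.
Qed.

Theorem proposition5p5 :
  (* (1) I = <p>, p the canonical binomial of v; L spanned by the exponent vector of p *)
  (forall (d : nat) (v : 'rV[int]_d),
     let p := canon_binom v in
     let I := ideal_gen (fun f => f = p) in
     let L := lattice_span (fun _ : 'I_1 => expvec (vpos v) (vneg v)) in
     same_ideal I (lattice_ideal L) /\
     (irreducible_mpoly p -> same_ideal I (lattice_ideal (Sat L)))) /\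
  (* (2) *)
  (forall (d k : nat) (a b : 'I_k -> 'X_{1..d}),
     let vs := fun i => expvec (a i) (b i) in
     (exists i, forall j : 'I_d, 0 < vs i ord0 j) ->
     let J := ideal_gen (fun f => exists i, f = canon_binom (vs i)) in
     let L := lattice_span vs in
     same_ideal J (lattice_ideal L)).
Proof.
split=> [d v p I L | d k a b vs vs_pos J L]; last exact: canonical_ideal_lattice_ideal.
have I_L : same_ideal I (lattice_ideal L).
  by rewrite /L expvec_canon; exact: principal_ideal_lattice_ideal.
split=> // p_irr f; rewrite I_L; split; apply: lattice_idealS => u.
  by exists 1; rewrite mulr1z.
rewrite /L expvec_canon.
exact/Sat_span1_primitive/irreducible_canon_binom_primitive.
Qed.
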